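(* Let $\alpha:X\to P(A\times X+1)$ be a discrete probabilistic transition system with $X$ finite, and let $x,y\in X$. Then the algorithm $\texttt{HKC}^\infty(x,y)$ described in the context terminates (for any order of extraction from $\mathit{todo}$), and it returns true if and only if $\langle\!\langle x\rangle\!\rangle=\langle\!\langle y\rangle\!\rangle$.
   Context: $A$ is a finite alphabet, $1=\{*\}$, $P(Y)$ the set of finitely supported probability distributions on $Y$, $\delta_x$ the point mass at $x$. $A^\infty=A^*\cup A^\omega$ with $\sigma$-algebra generated by $\{\emptyset\}\cup\{\{w\}\mid w\in A^*\}\cup\{wA^\infty\mid w\in A^*\}$. The trace semantics $\langle\!\langle x\rangle\!\rangle$ is the unique family of sub-probability measures on $A^\infty$ with $\langle\!\langle x\rangle\!\rangle(A^\infty)=1$, $\langle\!\langle x\rangle\!\rangle(\{\varepsilon\})=\alpha(x)( * )$, $\langle\!\langle x\rangle\!\rangle(awA^\infty)=\sum_y\alpha(x)(a,y)\langle\!\langle y\rangle\!\rangle(wA^\infty)$, $\langle\!\langle x\rangle\!\rangle(\{aw\})=\sum_y\alpha(x)(a,y)\langle\!\langle y\rangle\!\rangle(\{w\})$. On $\mathbb R^X$ define linear maps $\beta_1(u)=\sum_x u(x)$, $\beta_*(u)=\sum_x u(x)\alpha(x)( * )$, $\tau_a(u)(y)=\sum_x u(x)\alpha(x)(a,y)$. For $R\subseteq\mathbb R^X\times\mathbb R^X$, its congruence closure $c(R)$ is the smallest relation containing $R$ that is reflexive, symmetric, transitive, and closed under $(u,v)\mapsto(\lambda u,\lambda v)$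 for $\lambda\in\mathbb R$ and under $(u,v),(u',v')\mapsto(u+u',v+v')$. Algorithm $\texttt{HKC}^\infty(x,y)$: set $R:=\emptyset$, $\mathit{todo}:=\{(\delta_x,\delta_y)\}$; while $\mathit{todo}\neq\emptyset$: extract a pair $(u,v)$ from $\mathit{todo}$; if $(u,v)\in c(R)$, continue with the next iteration; if $\beta_1(u)\neq\beta_1(v)$ or $\beta_*(u)\neq\beta_*(v)$, return false; for all $a\in A$ insert $(\tau_a(u),\tau_a(v))$ into $\mathit{todo}$; insert $(u,v)$ into $R$. When $\mathit{todo}$ is empty, return true. *)

From HB Require Import structures.
From mathcomp Require Import all_boot all_order all_algebra.
Set Implicit Arguments. Unset Strict Implicit. Unset Printing Implicit Defensive.
Import Order.TTheory GRing.Theory Num.Theory.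
Local Open Scope ring_scope.

Section PTS.
Variables (R : realFieldType) (A X : finType).

(* alpha : X -> P(A * X + 1); the point * of 1 is None, (a,y) is Some (a,y). *)
Definition pts (alpha : X -> option (A * X) -> R) : Prop :=
  (forall x z, 0 <= alpha x z) /\ (forall x, \sum_z alpha x z = 1).

Variable alpha : X -> option (A * X) -> R.

(* Values of the trace measure on the generating sets of the sigma-algebra. *)
Fixpoint tr_cyl (w : seq A) : X -> R :=
  match w with
  | [::] => fun _ => 1
  | a :: w' => fun x => \sum_y alpha x (Some (a, y)) * tr_cyl w' y
  end.

Fixpoint tr_sing (w : seq A) : X -> R :=
  match w with
  | [::] => fun x => alpha x None
  | a :: w' => fun x => \sum_y alpha x (Some (a, y)) * tr_sing w' y
  end.

(* The generators of the sigma-algebra on A^oo: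
   GEmpty = emptyset, GSing w = {w}, GCyl w = w A^oo. *)
Inductive gen := GEmpty | GSing of seq A | GCyl of seq A.

(* <<x>> restricted to the generating family. *)
Definition trace (x : X) (g : gen) : R :=
  match g with
  | GEmpty => 0
  | GSing w => tr_sing w x
  | GCyl w => tr_cyl w x
  end.

Local Notation vec := {ffun X -> R}.

Definition delta (x : X) : vec := [ffun z => (z == x)%:R].
Definition beta1 (u : vec) : R := \sum_x u x.
Definition betastar (u : vec) : R := \sum_x u x * alpha x None.
Definition tau (a : A) (u : vec) : vec :=
  [ffun y => \sum_x u x * alpha x (Some (a, y))].

Inductive cc (Rel : seq (vec * vec)) : vec -> vec -> Prop :=
| cc_base u v : (u, v) \in Rel -> cc Rel u v
| cc_refl u : cc Rel u u
| cc_sym u v : cc Rel u v -> cc Rel v u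
| cc_trans u v w : cc Rel u v -> cc Rel v w -> cc Rel u w
| cc_scale (l : R) u v : cc Rel u v -> cc Rel [ffun z => l * u z] [ffun z => l * v z]
| cc_add u v u' v' : cc Rel u v -> cc Rel u' v' -> cc Rel (u + u') (v + v').

Inductive state := Running of seq (vec * vec) & seq (vec * vec) | Done of bool.

(* One iteration of the while loop; the extracted pair is an arbitrary
   element of todo (any extraction order). *)
Inductive hkc_step : state -> state -> Prop :=
| step_empty Rel : hkc_step (Running Rel [::]) (Done true)
| step_skip Rel t1 t2 u v :
    cc Rel u v ->
    hkc_step (Running Rel (t1 ++ (u, v) :: t2)) (Running Rel (t1 ++ t2))
| step_fail Rel t1 t2 u v :
    ~ cc Rel u v ->
    (beta1 u != beta1 v) || (betastar u != betastar v) ->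
    hkc_step (Running Rel (t1 ++ (u, v) :: t2)) (Done false)
| step_expand Rel t1 t2 u v :
    ~ cc Rel u v ->
    beta1 u = beta1 v -> betastar u = betastar v ->
    hkc_step (Running Rel (t1 ++ (u, v) :: t2))
             (Running ((u, v) :: Rel)
                      (t1 ++ t2 ++ [seq (tau a u, tau a v) | a <- enum A])).

Definition hkc_init (x y : X) : state := Running [::] [:: (delta x, delta y)].

Inductive reachable (s : state) : state -> Prop :=
| reach_refl : reachable s s
| reach_step s1 s2 : reachable s s1 -> hkc_step s1 s2 -> reachable s s2.

End PTS.

From HB Require Import structures.
From mathcomp Require Import all_boot all_order all_algebra.
From Stdlib Require Import Classical FunctionalExtensionality.
Set Implicit Arguments. Unset Strict Implicit. Unset Printing Implicit Defensive.
Import GRing.Theory.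
Local Open Scope ring_scope.

(* Write <<u>> := sum_z u z <<z>> for the linear extension of the trace to
   R^X.  It satisfies <<u>>(A^oo) = beta1 u, <<u>>({eps}) = betastar u and
   <<u>>(a w ...) = <<tau_a u>>(w ...), so a relation Rel that passes the
   beta tests and whose tau-successors lie in c(Rel) has c(Rel) inside the
   kernel of <<.>>: this makes the answer "true" sound.  Conversely, if
   <<x>> = <<y>> then every pair ever put in todo is trace-equivalent (tau
   preserves trace-equivalence), so no beta test fails.  Termination: c(Rel)
   contains every (u, v) with u - v in the span of the differences of Rel,
   so each expansion raises the dimension of that span, which is at most
   |X|; between two expansions todo shrinks. *)

Lemma mem_cat_cons (T : eqType) (q p : T) t1 t2 :
  (q \in t1 ++ p :: t2) = (q == p) || (q \in t1 ++ t2).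
Proof. by rewrite !mem_cat in_cons orbCA. Qed.

Lemma mem_cat_consl (T : eqType) (p : T) t1 t2 : p \in t1 ++ p :: t2.
Proof. by rewrite mem_cat_cons eqxx. Qed.

Section HKC.
Variables (R : realFieldType) (A X : finType).
Variable alpha : X -> option (A * X) -> R.
Local Notation vec := {ffun X -> R}.
Local Notation cc := (@cc R X).
Local Notation tau := (tau alpha).
Local Notation betastar := (betastar alpha).
Local Notation step := (hkc_step alpha).

Lemma cc_linear_map (Rel Rel' : seq (vec * vec)) (f : vec -> vec) :
    {morph f : u v / u + v} ->
    (forall l (u : vec), f [ffun z => l * u z] = [ffun z => l * f u z]) ->
    (forall p, p \in Rel -> cc Rel' (f p.1) (f p.2)) ->
  forall u v, cc Rel u v -> cc Rel' (f u) (f v).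
Proof.
move=> fD fZ fRel u v.
elim=> {u v} [u v /fRel // | u | u v _ | u v w _ uv _ vw | l u v _ | u v u' v' _ uv _ uv'].
- exact: cc_refl.
- exact: cc_sym.
- exact: cc_trans uv vw.
- by rewrite !fZ; apply: cc_scale.
- by rewrite !fD; apply: cc_add.
Qed.

Lemma cc_linear_eq (Rel : seq (vec * vec)) (f : vec -> R) :
    {morph f : u v / u + v} -> (forall l (u : vec), f [ffun z => l * u z] = l * f u) ->
    (forall p, p \in Rel -> f p.1 = f p.2) ->
  forall u v, cc Rel u v -> f u = f v.
Proof.
move=> fD fZ fRel u v; elim=> {u v} [u v /fRel //|//|_ _ _ -> //|_ _ _ _ -> _ -> //||].
- by move=> l u v _ uv; rewrite !fZ uv.
- by move=> u v u' v' _ uv _ uv'; rewrite !fD uv uv'.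
Qed.

Lemma cc_subset (Rel Rel' : seq (vec * vec)) u v :
  {subset Rel <= Rel'} -> cc Rel u v -> cc Rel' u v.
Proof.
by move=> sRel; apply: (cc_linear_map (f := id)) => // -[u' v'] /sRel; exact: cc_base.
Qed.

Lemma tauD a : {morph tau a : u v / u + v}.
Proof.
move=> u v; apply/ffunP => y; rewrite !ffunE -big_split.
by apply: eq_bigr => z _; rewrite ffunE mulrDl.
Qed.

Lemma tauZ a l (u : vec) : tau a [ffun z => l * u z] = [ffun z => l * tau a u z].
Proof.
apply/ffunP => y; rewrite !ffunE big_distrr.
by apply: eq_bigr => z _; rewrite ffunE /= mulrA.
Qed.

Lemma cc_tau (Rel : seq (vec * vec)) a :
    (forall p, p \in Rel -> cc Rel (tau a p.1) (tau a p.2)) ->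
  forall u v, cc Rel u v -> cc Rel (tau a u) (tau a v).
Proof. exact/cc_linear_map/tauZ/tauD. Qed.

Local Notation V := {ffun X -> R^o}.

Definition rel_span (Rel : seq (vec * vec)) : {vspace V} :=
  <<[seq (p.1 - p.2 : V) | p <- Rel]>>%VS.

Lemma cc_subr0 (Rel : seq (vec * vec)) u v : cc Rel u v <-> cc Rel (u - v) 0.
Proof.
split=> [uv | uv0].
  by rewrite -(subrr v); apply: cc_add uv (cc_refl _ _).
by rewrite -[u](subrK v) -[v in cc _ _ v]add0r; apply: cc_add uv0 (cc_refl _ _).
Qed.

Lemma cc_of_rel_span (Rel : seq (vec * vec)) (w : V) :
  w \in rel_span Rel -> cc Rel w 0.
Proof.
move=> /(@coord_span _ _ _ (in_tuple _)) ->; apply: (big_ind (fun w : V => cc Rel w 0)).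
- exact: cc_refl.
- by move=> w1 w2 c1 c2; rewrite -[0 : vec](addr0 0); apply: cc_add.
move=> i _; have /mapP [[u v] uv ->] := mem_nth 0 (ltn_ord i).
have /cc_subr0 /(cc_scale (coord (in_tuple _) i w)) := cc_base uv.
by congr (cc _ _ _); apply/ffunP => z; rewrite !ffunE ?mulr0.
Qed.

Lemma dim_rel_span_cons (Rel : seq (vec * vec)) u v : ~ cc Rel u v ->
  (\dim (rel_span Rel) < \dim (rel_span ((u, v) :: Rel)))%N.
Proof.
move=> nuv; have sRel : (rel_span Rel <= rel_span ((u, v) :: Rel))%VS.
  by rewrite /rel_span /= span_cons addvSr.
rewrite (ltn_leqif (dimv_leqif_sup sRel)); apply: contra_notN nuv => /subvP sRel'.
apply/cc_subr0/cc_of_rel_span/sRel'; exact/memv_span/mem_head.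
Qed.

Lemma running_step_decreases Rel todo Rel' todo' :
    step (Running Rel todo) (Running Rel' todo') ->
  (Rel' = Rel /\ size todo' < size todo)%N \/
  (\dim (rel_span Rel) < \dim (rel_span Rel'))%N.
Proof.
move=> st; inversion st; subst.
- by left; rewrite !size_cat /= addnS.
- by right; apply: dim_rel_span_cons.
Qed.

Lemma acc_done b : Acc (fun s' s => step s s') (Done R X b).
Proof. by constructor=> s' st; inversion st. Qed.

Lemma acc_running Rel todo : Acc (fun s' s => step s s') (Running Rel todo).
Proof.
have [n] := ubnP (\dim {:V} - \dim (rel_span Rel))%N.
elim: n Rel todo => [|n IHn] Rel todo; first by rewrite ltn0.
move=> ltRn; have [m] := ubnP (size todo).
elim: m todo => [|m IHm] todo; first by rewrite ltn0.
move=> lttm; constructor=> -[Rel' todo' | b] st; last exact: acc_done.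
have [[-> lttodo] | ltRel] := running_step_decreases st.
  exact/IHm/(leq_trans lttodo).
apply: IHn; rewrite -ltnS (leq_trans _ ltRn) // ltnS ltn_sub2l //.
exact/(leq_trans ltRel)/dimvS/subvf.
Qed.

Lemma hkc_running_progress Rel todo : exists s', step (Running Rel todo) s'.
Proof.
case: todo => [|[u v] todo]; first by exists (Done R X true); constructor.
have [uv | nuv] := classic (cc Rel u v).
  by eexists; apply: (step_skip alpha [::]).
have [beta_eq | beta_neq] := boolP ((beta1 u == beta1 v) && (betastar u == betastar v)).
  case/andP: beta_eq => /eqP beta1_eq /eqP betastar_eq.
  by eexists; exact: (step_expand [::] todo nuv beta1_eq betastar_eq).
by eexists; apply: (step_fail [::]) => //; rewrite -negb_and.
Qed.

Definition trace_vec (u : vec) (g : gen A) : R := \sum_z u z * trace alpha z g.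

Lemma trace_vec_delta x : trace_vec (delta R x) = trace alpha x.
Proof.
apply: functional_extensionality => g; rewrite /trace_vec (bigD1 x) //= ffunE eqxx mul1r.
by rewrite big1 ?addr0 // => z /negbTE zx; rewrite ffunE zx mul0r.
Qed.

Lemma trace_vec_empty u : trace_vec u (GEmpty A) = 0.
Proof. by rewrite /trace_vec big1 // => z _; rewrite mulr0. Qed.

Lemma trace_vec_cyl_nil u : trace_vec u (GCyl [::]) = beta1 u.
Proof. by apply: eq_bigr => z _; rewrite mulr1. Qed.

Lemma trace_vec_sing_nil u : trace_vec u (GSing [::]) = betastar u.
Proof. by []. Qed.

Lemma sum_mul_tau (f : X -> R) a (u : vec) :
  \sum_z u z * (\sum_y alpha z (Some (a, y)) * f y) = \sum_y tau a u y * f y.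
Proof.
under eq_bigr do rewrite big_distrr; rewrite exchange_big /=.
apply: eq_bigr => y _; rewrite ffunE big_distrl /=.
by apply: eq_bigr => z _; rewrite mulrA.
Qed.

Lemma trace_vec_cyl_cons a w u : trace_vec u (GCyl (a :: w)) = trace_vec (tau a u) (GCyl w).
Proof. exact: sum_mul_tau. Qed.

Lemma trace_vec_sing_cons a w u : trace_vec u (GSing (a :: w)) = trace_vec (tau a u) (GSing w).
Proof. exact: sum_mul_tau. Qed.

Lemma trace_vecD g : {morph trace_vec ^~ g : u v / u + v}.
Proof.
by move=> u v; rewrite /trace_vec -big_split; apply: eq_bigr => z _; rewrite ffunE mulrDl.
Qed.

Lemma trace_vecZ g l (u : vec) : trace_vec [ffun z => l * u z] g = l * trace_vec u g.
Proof.
by rewrite /trace_vec big_distrr; apply: eq_bigr => z _; rewrite ffunE /= mulrA.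
Qed.

Lemma trace_vec_tau a u v :
  trace_vec u = trace_vec v -> trace_vec (tau a u) = trace_vec (tau a v).
Proof.
move=> uv; apply: functional_extensionality => -[|w|w].
- by rewrite !trace_vec_empty.
- by rewrite -!trace_vec_sing_cons uv.
- by rewrite -!trace_vec_cyl_cons uv.
Qed.

Definition pending (Rel todo : seq (vec * vec)) (p : vec * vec) :=
  cc Rel p.1 p.2 \/ p \in todo.

(* Rel is a bisimulation up to congruence, except that some of the successor
   pairs it requires may still be waiting in todo. *)
Definition bisim_upto (Rel todo : seq (vec * vec)) :=
  forall p, p \in Rel -> [/\ beta1 p.1 = beta1 p.2, betastar p.1 = betastar p.2
    & forall a, pending Rel todo (tau a p.1, tau a p.2)].

Lemma bisim_upto_trace Rel u v :
  bisim_upto Rel [::] -> cc Rel u v -> trace_vec u = trace_vec v.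
Proof.
move=> bisim; have cc_tau_Rel a : forall u v, cc Rel u v -> cc Rel (tau a u) (tau a v).
  by apply: cc_tau => p /bisim [_ _ /(_ a) []].
suff trace_eq w : forall u v, cc Rel u v ->
    trace_vec u (GCyl w) = trace_vec v (GCyl w) /\ trace_vec u (GSing w) = trace_vec v (GSing w).
  move=> uv; apply: functional_extensionality => -[|w|w]; first by rewrite !trace_vec_empty.
  - by have [] := trace_eq w u v uv.
  - by have [] := trace_eq w u v uv.
elim: w => [|a w IHw] {}u {}v uv; last first.
  by rewrite !trace_vec_cyl_cons !trace_vec_sing_cons; apply/IHw/cc_tau_Rel.
split; apply: (cc_linear_eq (trace_vecD _) (trace_vecZ _)) uv => p /bisim [].
- by rewrite !trace_vec_cyl_nil.
- by rewrite !trace_vec_sing_nil.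
Qed.

Lemma pending_skip Rel t1 t2 u v p :
  cc Rel u v -> pending Rel (t1 ++ (u, v) :: t2) p -> pending Rel (t1 ++ t2) p.
Proof.
move=> uv [pRel | ]; first by left.
by rewrite mem_cat_cons => /orP [/eqP -> | pt]; [left | right].
Qed.

Lemma pending_expand Rel t1 t2 ts u v p :
  pending Rel (t1 ++ (u, v) :: t2) p -> pending ((u, v) :: Rel) (t1 ++ t2 ++ ts) p.
Proof.
case=> [pRel | ]; first by left; apply: cc_subset pRel => q; apply: (@mem_behead _ (_ :: _)).
rewrite mem_cat_cons => /orP [/eqP -> | pt]; first by left; apply/cc_base/mem_head.
by right; rewrite catA mem_cat pt.
Qed.

Lemma bisim_upto_skip Rel t1 t2 u v :
  cc Rel u v -> bisim_upto Rel (t1 ++ (u, v) :: t2) -> bisim_upto Rel (t1 ++ t2).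
Proof.
move=> uv bisim p /bisim [b1_eq bs_eq pend]; split=> // a; exact: pending_skip uv (pend a).
Qed.

Lemma bisim_upto_expand Rel t1 t2 u v :
    beta1 u = beta1 v -> betastar u = betastar v ->
    bisim_upto Rel (t1 ++ (u, v) :: t2) ->
  bisim_upto ((u, v) :: Rel) (t1 ++ t2 ++ [seq (tau a u, tau a v) | a <- enum A]).
Proof.
move=> b1_eq bs_eq bisim p; rewrite inE => /orP [/eqP -> | /bisim [b1p bsp pend]].
  split=> // a; right; rewrite catA mem_cat.
  by rewrite (map_f (fun a => (tau a u, tau a v))) ?mem_enum ?orbT.
by split=> // a; apply: pending_expand (pend a).
Qed.

Variables x y : X.

Definition hkc_inv (s : state R X) : Prop :=
  match s with
  | Running Rel todo =>
      [/\ bisim_upto Rel todo, pending Rel todo (delta R x, delta R y)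
         & trace alpha x = trace alpha y ->
           forall p, p \in todo -> trace_vec p.1 = trace_vec p.2]
  | Done b => b = true <-> trace alpha x = trace alpha y
  end.

Lemma hkc_inv_step s s' : hkc_inv s -> step s s' -> hkc_inv s'.
Proof.
move=> inv st; case: st inv => [Rel | Rel t1 t2 u v uv | Rel t1 t2 u v _ beta_neq
                               | Rel t1 t2 u v _ b1_eq bs_eq] /=.
- case=> bisim [xy | //] _; split=> // _.
  by rewrite -!trace_vec_delta; apply: bisim_upto_trace xy.
- case=> bisim xy sound.
  split; [exact: bisim_upto_skip uv bisim | exact: pending_skip uv xy | ].
  by move=> xy_eq p pt; apply: sound; rewrite // mem_cat_cons pt orbT.
- case=> _ _ sound; split=> // xy_eq.
  have /= uv_eq := sound xy_eq (u, v) (mem_cat_consl _ _ _).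
  by move: beta_neq; rewrite -!trace_vec_cyl_nil -!trace_vec_sing_nil uv_eq !eqxx.
- case=> bisim xy sound.
  split; [exact: bisim_upto_expand b1_eq bs_eq bisim | exact: pending_expand xy | ].
  move=> xy_eq p; rewrite catA mem_cat => /orP [pt | /mapP [a _ ->]].
    by apply: sound; rewrite // mem_cat_cons pt orbT.
  exact/trace_vec_tau/(sound xy_eq (u, v) (mem_cat_consl _ _ _)).
Qed.

Lemma hkc_inv_reachable s : reachable alpha (hkc_init R x y) s -> hkc_inv s.
Proof.
elim=> [|s1 s2 _ inv1 st]; last exact: hkc_inv_step st.
split; [by [] | right; exact: mem_head | ].
by move=> xy_eq p; rewrite inE => /eqP -> /=; rewrite !trace_vec_delta.
Qed.

End HKC.

Theorem mainTheorem18 (R : realFieldType) (A X : finType)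
    (alpha : X -> option (A * X) -> R) (x y : X) :
  pts alpha ->
  (* termination: no infinite run, whatever the extraction order *)
  Acc (fun s' s => hkc_step alpha s s') (hkc_init R x y) /\
  (* every run ends by returning some b, and b = true iff <<x>> = <<y>> *)
  (forall s, reachable alpha (hkc_init R x y) s ->
     (forall s', ~ hkc_step alpha s s') ->
     exists b, s = Done R X b /\ (b = true <-> trace alpha x = trace alpha y)).
Proof.
move=> _; split=> [|s reach stuck]; first exact: acc_running.
case: s reach stuck => [Rel todo | b] reach stuck.
  by have [s' st] := hkc_running_progress alpha Rel todo; case: (stuck s' st).
by exists b; split; last exact: hkc_inv_reachable reach.
Qed.
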